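(* Let $A=[A_1,\dots,A_n]\in\mathbb{R}^{p\times n}$ be mean-removed, i.e. $A\mathbf{1}=\mathbf{0}$, and let $\beta\doteq-\min_{i,j}(A^TA)_{ij}$. Put $\tilde A=\begin{bmatrix}\sqrt{\beta}\,\mathbf{1}^T\\ A\end{bmatrix}\in\mathbb{R}^{(p+1)\times n}$ and $W\doteq\tilde A^T\tilde A$. Let $F\in\mathbb{R}^{K\times n}$ be the class indicator matrix of the $n$ samples. If $W$ satisfies the ideal graph condition for classification, i.e. $W_{ij}=0$ for all $i,j$ with $F_i\neq F_j$, then $\sqrt{\beta n}$ is the largest singular value of $\tilde A$ and every row of $F$ lies in the span of the right singular vectors of $\tilde A$ associated with the singular value $\sqrt{\beta n}$ (in particular in the row space of $\tilde A$). Consequently zero fitting error is achieved: any minimizer $D^*$ of $\|F-D\tilde A\|_F^2$ over $D\in\mathbb{R}^{K\times(p+1)}$ satisfies $F=D^*\tilde A$.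
   Context: $\mathbf{1}$ denotes the all-ones vector. The indicator matrix $F=[F_1,\dots,F_n]$ has columns $F_i=e_k$ (the $k$th standard basis vector of $\mathbb{R}^K$) if the $i$th sample belongs to class $k$. Since $A\mathbf{1}=\mathbf{0}$ (and $A\neq 0$), $\beta>0$ and $W$ is entrywise nonnegative. Linear regression for classification (LRC) solves $\min_D\|F-D\tilde A\|_F^2$. *)

From HB Require Import structures.
From mathcomp Require Import all_boot all_order all_algebra.
Set Implicit Arguments. Unset Strict Implicit. Unset Printing Implicit Defensive.
Import Order.TTheory GRing.Theory Num.Theory.
Local Open Scope ring_scope.

Definition frob2 (R : rcfType) (m n : nat) (M : 'M[R]_(m, n)) : R :=
  \sum_(i < m) \sum_(j < n) M i j ^+ 2.

Definition singular_value (R : rcfType) (m n : nat) (M : 'M[R]_(m, n)) (s : R) : Prop :=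
  0 <= s /\ exists (u : 'cV[R]_m) (v : 'cV[R]_n),
    u^T *m u = 1%:M /\ v^T *m v = 1%:M /\ M *m v = s *: u /\ M^T *m u = s *: v.

Definition largest_singular_value (R : rcfType) (m n : nat) (M : 'M[R]_(m, n)) (s : R) : Prop :=
  singular_value M s /\ forall t, singular_value M t -> t <= s.

Definition right_singular_vector (R : rcfType) (m n : nat) (M : 'M[R]_(m, n)) (s : R)
  (v : 'cV[R]_n) : Prop :=
  0 <= s /\ v^T *m v = 1%:M /\ exists u : 'cV[R]_m,
    u^T *m u = 1%:M /\ M *m v = s *: u /\ M^T *m u = s *: v.

Definition in_right_singular_span (R : rcfType) (m n : nat) (M : 'M[R]_(m, n)) (s : R)
  (x : 'cV[R]_n) : Prop :=
  exists (r : nat) (c : 'I_r -> R) (V : 'I_r -> 'cV[R]_n),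
    (forall t, right_singular_vector M s (V t)) /\ x = \sum_(t < r) c t *: V t.

Definition augment (R : rcfType) (p n : nat) (beta : R) (A : 'M[R]_(p, n)) : 'M[R]_(1 + p, n) :=
  col_mx (Num.sqrt beta *: const_mx 1) A.

Definition indicator (R : rcfType) (K n : nat) (y : 'I_n -> 'I_K) : 'M[R]_(K, n) :=
  \matrix_(k < K, i < n) (y i == k)%:R.

From HB Require Import structures.
From mathcomp Require Import all_boot all_order all_algebra.
From mathcomp Require Import ring lra.
Import Order.TTheory GRing.Theory Num.Theory.
Local Open Scope ring_scope.

(* The Gram matrix W = beta 1 1^T + A^T A of the augmented matrix is entrywise
   nonnegative and, because A 1 = 0, has constant row sums beta n.  For such a
   symmetric matrix the quadratic form is bounded by beta n |x|^2, and 1 attains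
   the bound, so sqrt (beta n) is the largest singular value.  The ideal graph
   condition makes W block diagonal along the classes, so every row of F is an
   eigenvector of W for beta n; hence F = (beta n)^-1 F At^T At lies in the row
   space of At and the least-squares residual vanishes. *)

Section AugmentedGram.

Set Implicit Arguments.
Unset Strict Implicit.

Variable R : rcfType.

Lemma sum_sqr_eq0 {I : finType} {f : I -> R} :
  \sum_i f i ^+ 2 = 0 -> forall i, f i = 0.
Proof.
move=> f0 i; apply/eqP; rewrite -sqrf_eq0; apply/eqP.
exact: (psumr_eq0P (fun j _ => sqr_ge0 (f j)) f0).
Qed.

Lemma trcV_mul_self (n : nat) (x : 'cV[R]_n) :
  x^T *m x = (\sum_i x i 0 ^+ 2)%:M.
Proof.
apply/matrixP=> i j; rewrite !mxE (ord1 i) (ord1 j) eqxx mulr1n.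
by apply: eq_bigr => k _; rewrite mxE expr2.
Qed.

Lemma mulmx_const1E (m n : nat) (W : 'M[R]_(m, n)) i :
  (W *m (const_mx 1 : 'cV[R]_n)) i 0 = \sum_j W i j.
Proof. by rewrite mxE; apply: eq_bigr => j _; rewrite mxE mulr1. Qed.

Lemma trmx_gram (m n : nat) (M : 'M[R]_(m, n)) : (M^T *m M)^T = M^T *m M.
Proof. by rewrite trmx_mul trmxK. Qed.

Lemma right_singular_vector_eigen (m n : nat) (M : 'M[R]_(m, n)) s v :
  0 < s -> v^T *m v = 1%:M -> M^T *m M *m v = s ^+ 2 *: v ->
  right_singular_vector M s v.
Proof.
move=> s_gt0 v_unit Mv; split; first exact: ltW.
split=> //; exists (s^-1 *: (M *m v)); split; last split.
- rewrite linearZ /= [(_ *: _)^T]linearZ /= -scalemxAl scalerA trmx_mul -mulmxA.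
  rewrite [M^T *m _]mulmxA Mv -scalemxAr v_unit scalerA scalemx1.
  by congr (_%:M); field; rewrite gt_eqF.
- by rewrite scalerA mulfV ?gt_eqF // scale1r.
- by rewrite -scalemxAr mulmxA Mv scalerA expr2 mulrA mulVf ?gt_eqF // mul1r.
Qed.

Lemma singular_value_of_vector (m n : nat) (M : 'M[R]_(m, n)) s v :
  right_singular_vector M s v -> singular_value M s.
Proof. by move=> [s_ge0 [v_unit [u [u_unit [Mv Mu]]]]]; split=> //; exists u, v. Qed.

Lemma eigen_right_singular_vector (m n : nat) (M : 'M[R]_(m, n)) s x :
  x != 0 -> 0 < s -> M^T *m M *m x = s ^+ 2 *: x ->
  exists c v, right_singular_vector M s v /\ x = c *: v.
Proof.
move=> x_neq0 s_gt0 Mx; set q := \sum_i x i 0 ^+ 2.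
have q_gt0 : 0 < q.
  rewrite lt_def sumr_ge0 ?andbT => [|i _]; last exact: sqr_ge0.
  apply: contra x_neq0 => /eqP q0; apply/eqP/matrixP => i j.
  by rewrite (ord1 j) mxE (sum_sqr_eq0 q0).
have c_neq0 : Num.sqrt q != 0 by rewrite gt_eqF // sqrtr_gt0.
exists (Num.sqrt q), ((Num.sqrt q)^-1 *: x); split; last first.
  by rewrite scalerA mulfV // scale1r.
apply: right_singular_vector_eigen => //.
  rewrite linearZ /= [(_ *: _)^T]linearZ /= -scalemxAl scalerA trcV_mul_self.
  by rewrite scale_scalar_mx -invfM -expr2 sqr_sqrtr ?ltW // mulVf ?gt_eqF.
by rewrite -scalemxAr Mx !scalerA mulrC.
Qed.

Lemma in_right_singular_span_eigen (m n : nat) (M : 'M[R]_(m, n)) s x :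
  0 < s -> M^T *m M *m x = s ^+ 2 *: x -> in_right_singular_span M s x.
Proof.
move=> s_gt0 Mx; have [->|x_neq0] := eqVneq x 0.
  by exists 0%N, (fun _ => 0), (fun _ => 0); rewrite big_ord0; split=> [[]|].
have [c [v [v_sing ->]]] := eigen_right_singular_vector x_neq0 s_gt0 Mx.
by exists 1%N, (fun _ => c), (fun _ => v); rewrite big_ord1.
Qed.

(* Schur test: 2 W_ij x_i x_j <= W_ij (x_i^2 + x_j^2) summed over i, j. *)
Lemma quad_form_le_rowsum (n : nat) (W : 'M[R]_n) b (x : 'cV[R]_n) :
  W^T = W -> (forall i j, 0 <= W i j) -> (forall i, \sum_j W i j = b) ->
  (x^T *m (W *m x)) 0 0 <= b * \sum_i x i 0 ^+ 2.
Proof.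
move=> W_sym W_ge0 W_row.
have W_swap i j : W j i = W i j by rewrite -[in LHS]W_sym mxE.
have rows : \sum_i \sum_j W i j * x i 0 ^+ 2 = b * \sum_i x i 0 ^+ 2.
  by rewrite big_distrr; apply: eq_bigr => i _; rewrite -big_distrl W_row.
have cols : \sum_i \sum_j W i j * x j 0 ^+ 2 = b * \sum_i x i 0 ^+ 2.
  rewrite exchange_big big_distrr; apply: eq_bigr => i _ /=.
  by under eq_bigr do rewrite W_swap; rewrite -big_distrl W_row.
have form : (x^T *m (W *m x)) 0 0 = \sum_i \sum_j W i j * x i 0 * x j 0.
  rewrite mxE; apply: eq_bigr => i _; rewrite !mxE big_distrr.
  by apply: eq_bigr => j _ /=; ring.
have amgm : 2 * \sum_i \sum_j W i j * x i 0 * x j 0 <=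
    \sum_i \sum_j W i j * x i 0 ^+ 2 + \sum_i \sum_j W i j * x j 0 ^+ 2.
  rewrite mulr_sumr -big_split /=; apply: ler_sum => i _.
  rewrite mulr_sumr -big_split /=; apply: ler_sum => j _.
  have := mulr_ge0 (W_ge0 i j) (sqr_ge0 (x i 0 - x j 0)); nra.
by move: amgm; rewrite form rows cols; lra.
Qed.

Lemma singular_value_le_sqrt_rowsum (m n : nat) (M : 'M[R]_(m, n)) b t :
  (forall i j, 0 <= (M^T *m M) i j) -> (forall i, \sum_j (M^T *m M) i j = b) ->
  singular_value M t -> t <= Num.sqrt b.
Proof.
move=> W_ge0 W_row [t_ge0 [u [v [u_unit [v_unit [Mv Mu]]]]]].
have Wv : M^T *m M *m v = t ^+ 2 *: v.
  by rewrite -mulmxA Mv -scalemxAr Mu scalerA expr2.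
have v_norm : \sum_i v i 0 ^+ 2 = 1.
  by move/matrixP: v_unit => /(_ 0 0); rewrite trcV_mul_self !mxE eqxx !mulr1n.
have := quad_form_le_rowsum v (trmx_gram M) W_ge0 W_row.
rewrite Wv -scalemxAr v_unit v_norm !mxE eqxx mulr1n !mulr1 => t2_le.
by rewrite -(ger0_norm t_ge0) -sqrtr_sqr ler_sqrt // (le_trans (sqr_ge0 t)).
Qed.

Lemma largest_singular_value_rowsum (m n : nat) (M : 'M[R]_(m, n)) b :
  (0 < n)%N -> 0 < b ->
  (forall i j, 0 <= (M^T *m M) i j) -> (forall i, \sum_j (M^T *m M) i j = b) ->
  largest_singular_value M (Num.sqrt b).
Proof.
move=> n_gt0 b_gt0 W_ge0 W_row.
split; last by move=> t; apply: singular_value_le_sqrt_rowsum.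
have one_neq0 : (const_mx 1 : 'cV[R]_n) != 0.
  by apply/eqP => /matrixP/(_ (Ordinal n_gt0) 0); rewrite !mxE => /eqP; rewrite oner_eq0.
have W1 : M^T *m M *m const_mx 1 = Num.sqrt b ^+ 2 *: (const_mx 1 : 'cV[R]_n).
  apply/matrixP => i j; rewrite (ord1 j) mulmx_const1E W_row sqr_sqrtr ?ltW //.
  by rewrite !mxE mulr1.
have s_gt0 : 0 < Num.sqrt b by rewrite sqrtr_gt0.
have [c [v [v_sing _]]] := eigen_right_singular_vector one_neq0 s_gt0 W1.
exact: singular_value_of_vector v_sing.
Qed.

Lemma frob2_ge0 (m n : nat) (M : 'M[R]_(m, n)) : 0 <= frob2 M.
Proof. by apply: sumr_ge0 => i _; apply: sumr_ge0 => j _; exact: sqr_ge0. Qed.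

Lemma frob2_eq0 (m n : nat) (M : 'M[R]_(m, n)) : frob2 M = 0 -> M = 0.
Proof.
move=> M0; apply/matrixP => i j; rewrite mxE.
have row_i : \sum_j M i j ^+ 2 = 0.
  by apply: (psumr_eq0P _ M0) => // k _; apply: sumr_ge0 => l _; exact: sqr_ge0.
exact: (sum_sqr_eq0 row_i j).
Qed.

Lemma frob20 (m n : nat) : frob2 (0 : 'M[R]_(m, n)) = 0.
Proof. by rewrite /frob2 big1 // => i _; rewrite big1 // => j _; rewrite mxE expr0n. Qed.

Lemma least_squares_exact (k m n : nat) (F : 'M[R]_(k, n)) (M : 'M[R]_(m, n)) Ds :
  (F <= M)%MS ->
  (forall D, frob2 (F - Ds *m M) <= frob2 (F - D *m M)) -> F = Ds *m M.
Proof.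
move=> /submxP [D0 ->] Ds_min; apply/eqP; rewrite -subr_eq0; apply/eqP.
apply: frob2_eq0; apply/eqP; rewrite eq_le frob2_ge0 andbT.
by rewrite -(frob20 k n) -(subrr (D0 *m M)) Ds_min.
Qed.

Lemma submx_gram_eigen (k m n : nat) (X : 'M[R]_(k, n)) (M : 'M[R]_(m, n)) b :
  b != 0 -> X *m (M^T *m M) = b *: X -> (X <= M)%MS.
Proof.
move=> b_neq0 XW; apply/submxP; exists (b^-1 *: (X *m M^T)).
by rewrite -scalemxAl -mulmxA XW scalerA mulVf // scale1r.
Qed.

Section ClassIndicator.

Variables (K n : nat) (y : 'I_n -> 'I_K).

Lemma col_indicator_inj i j : col i (indicator R y) = col j (indicator R y) -> y i = y j.
Proof.
move/matrixP/(_ (y i) 0); rewrite !mxE eqxx eq_sym.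
by have [//|_] := eqVneq (y i) (y j); move/eqP; rewrite oner_eq0.
Qed.

Lemma indicator_eigen (W : 'M[R]_n) b :
  (forall i, \sum_j W i j = b) -> (forall i j, y i != y j -> W i j = 0) ->
  W *m (indicator R y)^T = b *: (indicator R y)^T.
Proof.
move=> W_row W_block; apply/matrixP => i k; rewrite !mxE.
under eq_bigr do rewrite !mxE.
have [<-|yik] := eqVneq (y i) k.
  rewrite mulr1 -(W_row i); apply: eq_bigr => j _.
  by have [_|yji] := eqVneq (y j) (y i); rewrite ?mulr1 // W_block ?mul0r // eq_sym.
rewrite mulr0 big1 // => j _.
by have [yjk|] := eqVneq (y j) k; rewrite ?mulr0 // W_block ?mul0r // yjk.
Qed.

End ClassIndicator.

Section MeanRemoved.

Variables (p n : nat) (A : 'M[R]_(p, n)).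

Lemma augment_gram beta : 0 <= beta ->
  (augment beta A)^T *m augment beta A = beta *: const_mx 1 + A^T *m A.
Proof.
move=> beta_ge0; rewrite /augment tr_col_mx mul_row_col; congr (_ + _).
apply/matrixP=> i j; rewrite !mxE big_ord1 !mxE.
by rewrite !mulr1 -expr2 sqr_sqrtr.
Qed.

Hypothesis A_centered : A *m (const_mx 1 : 'cV[R]_n) = 0.

Lemma gram_rowsum_centered i : \sum_j (A^T *m A) i j = 0.
Proof. by rewrite -mulmx_const1E -mulmxA A_centered mulmx0 mxE. Qed.

(* If beta <= 0, the Gram matrix is nonnegative with zero row sums, hence zero,
   and its zero diagonal forces A = 0. *)
Lemma gram_lower_bound_neg beta :
  A != 0 -> (forall i j, - beta <= (A^T *m A) i j) -> 0 < beta.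
Proof.
move=> A_neq0 beta_min; rewrite ltNge; apply: contra A_neq0 => beta_le0.
have W_ge0 i j : 0 <= (A^T *m A) i j.
  by apply: le_trans (beta_min i j); rewrite oppr_ge0.
apply/eqP/matrixP => k i; rewrite mxE.
have diag0 : (A^T *m A) i i = 0.
  by apply: (psumr_eq0P _ (gram_rowsum_centered i)) => // j _; exact: W_ge0.
have col0 : \sum_l A l i ^+ 2 = 0.
  by rewrite -[RHS]diag0 mxE; apply: eq_bigr => l _; rewrite mxE expr2.
exact: (sum_sqr_eq0 col0 k).
Qed.

End MeanRemoved.

End AugmentedGram.

Theorem theorem1 (R : rcfType) (p n K : nat) (A : 'M[R]_(p, n)) (beta : R)
    (y : 'I_n -> 'I_K) :
  A *m (const_mx 1 : 'cV[R]_n) = 0 ->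
  A != 0 ->
  (* beta = - min_{i,j} (A^T A)_{ij} *)
  (exists i j, (A^T *m A) i j = - beta) ->
  (forall i j, - beta <= (A^T *m A) i j) ->
  let At := augment beta A in
  let W := At^T *m At in
  let F := indicator R y in
  (* ideal graph condition *)
  (forall i j, col i F != col j F -> W i j = 0) ->
  largest_singular_value At (Num.sqrt (beta * n%:R))
  /\ (forall k : 'I_K, in_right_singular_span At (Num.sqrt (beta * n%:R)) (row k F)^T)
  /\ (F <= At)%MS
  /\ (forall Dstar : 'M[R]_(K, 1 + p),
        (forall D : 'M[R]_(K, 1 + p), frob2 (F - Dstar *m At) <= frob2 (F - D *m At)) ->
        F = Dstar *m At).
Proof.
move=> A_centered A_neq0 [i0 _] beta_min At W F ideal.
have n_gt0 : (0 < n)%N by case: i0 => i0 /= /(leq_ltn_trans (leq0n i0)).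
have beta_gt0 := gram_lower_bound_neg A_centered A_neq0 beta_min.
set b := beta * n%:R; have b_gt0 : 0 < b by rewrite mulr_gt0 ?ltr0n.
have WE i j : W i j = beta + (A^T *m A) i j.
  by rewrite /W /At augment_gram ?ltW // !mxE mulr1.
have W_ge0 i j : 0 <= W i j by rewrite WE -lerBlDl sub0r beta_min.
have W_row i : \sum_j W i j = b.
  under eq_bigr do rewrite WE.
  by rewrite big_split /= gram_rowsum_centered // addr0 sumr_const card_ord -mulr_natr.
have W_block i j : y i != y j -> W i j = 0.
  by move=> yij; apply/ideal/(contra_neq (@col_indicator_inj _ _ _ y i j)).
have WFt : W *m F^T = b *: F^T := indicator_eigen (y := y) W_row W_block.
have F_sub : (F <= At)%MS.
  apply: (submx_gram_eigen (b := b)); first by rewrite gt_eqF.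
  by rewrite -[F]trmxK -(trmx_gram At) -trmx_mul WFt linearZ.
split; first exact: largest_singular_value_rowsum.
split; last by split=> // Ds; apply: least_squares_exact.
move=> k; apply: in_right_singular_span_eigen; first by rewrite sqrtr_gt0.
by rewrite sqr_sqrtr ?ltW // tr_row colE mulmxA WFt scalemxAl.
Qed.
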